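(* Let $q$ be a prime power, $n\ge 4$, and let $\mathcal{L}$ be a Cameron-Liebler line class of $\mathrm{AG}(n,q)$ with parameter $x=2$. Then for every two points $p_1,p_2$ of $\pi_\infty$, there are exactly two lines of $\mathcal{L}$ through $p_1$ and exactly two through $p_2$ (a line passing through a point of $\pi_\infty$ meaning its projective closure contains it), and these four lines span a projective subspace of $\mathrm{PG}(n,q)$ of dimension at most $3$.
   Context: $\mathrm{AG}(n,q)$ is $\mathrm{PG}(n,q)$ with a hyperplane $\pi_\infty$ removed; affine points are points outside $\pi_\infty$, affine lines are projective lines not contained in $\pi_\infty$. With $A_n$ the incidence matrix of affine points versus affine lines, a set $\mathcal{L}$ of affine lines is a Cameron-Liebler line class of $\mathrm{AG}(n,q)$ if its characteristic vector lies in the real row space $\mathrm{Im}(A_n^T)$; its parameter is $|\mathcal{L}|(q-1)/(q^n-1)$. *)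

From HB Require Import structures.
From mathcomp Require Import all_boot all_order all_algebra all_field.
From mathcomp Require Import reals.
Set Implicit Arguments. Unset Strict Implicit. Unset Printing Implicit Defensive.
Import Order.TTheory GRing.Theory Num.Theory.
Local Open Scope ring_scope.

(* AG(n,q) over a finite field F with q = #|F|: affine points are 'rV[F]_n.
   A point of pi_infty is a 1-dimensional subspace of F^n, represented by a
   nonzero direction vector d. *)

Definition line_dir (F : finFieldType) (n : nat) (a d : 'rV[F]_n)
  : {set 'rV[F]_n} := [set a + t *: d | t : F].

Definition is_aline (F : finFieldType) (n : nat) (L : {set 'rV[F]_n}) : bool :=
  [exists a, exists d, (d != 0) && (L == line_dir a d)].

(* the projective closure of the affine line L contains the point at
   infinity represented by d (d nonzero) *)
Definition through_inf (F : finFieldType) (n : nat) (L : {set 'rV[F]_n})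
  (d : 'rV[F]_n) : bool :=
  [exists a, L == line_dir a d].

(* Cameron-Liebler line class of AG(n,q): a set of affine lines whose
   characteristic vector chi (indexed by affine lines) lies in the real row
   space Im(A_n^T), i.e. chi = A_n^T w for some real vector w indexed by
   affine points: chi(L) = sum_{P in L} w(P) for every affine line L. *)
Definition CL_class (R : realType) (F : finFieldType) (n : nat)
  (Lc : {set {set 'rV[F]_n}}) : Prop :=
  (forall L, L \in Lc -> is_aline L) /\
  exists w : 'rV[F]_n -> R,
    forall L, is_aline L -> ((L \in Lc)%:R = \sum_(P in L) w P).

Definition CL_param (R : realType) (F : finFieldType) (n : nat)
  (Lc : {set {set 'rV[F]_n}}) : R :=
  (#|Lc|%:R * (#|F|%:R - 1)) / (#|F|%:R ^+ n - 1).

(* homogeneous coordinates in F^(n+1) of an affine point of PG(n,q) *)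
Definition hom (F : finFieldType) (n : nat) (P : 'rV[F]_n) : 'rV[F]_(n + 1) :=
  row_mx P (1 : 'M[F]_1).

(* vector subspace of F^(n+1) spanned by (the projective closures of) a set
   of affine lines; projective dimension of the span = \rank - 1 *)
Definition span_lines (F : finFieldType) (n : nat) (S : {set {set 'rV[F]_n}})
  : 'M[F]_(n + 1) :=
  (\sum_(L in S) \sum_(P in L) <<hom P>>)%MS.

From Pilot Require Import Defs.
From HB Require Import structures.
From mathcomp Require Import all_boot all_order all_algebra all_field.
From mathcomp Require Import reals.
Import Order.TTheory GRing.Theory Num.Theory.
Local Open Scope ring_scope.

(* The affine lines with a fixed direction d
   partition every d-closed set S of points, so the number of lines of the
   class that have direction d and lie in S is the total weight of S.  With
   S the whole space this number is the same for every point at infinity, and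
   double counting the incidences (line of the class, point at infinity)
   identifies it with the parameter x = 2.  With S the affine plane through a
   line L of direction d2 and parallel to d1, the class has as many lines of
   direction d1 in S as of direction d2, hence at least one: L lies in the
   span of the lines of the class through d1 and the two points at infinity,
   a space of rank at most 2 + 2. *)

Section AffineLines.
Context {F : finFieldType} {n : nat}.
Implicit Types (a b d e P : 'rV[F]_n) (L S : {set 'rV[F]_n}).

Lemma line_dirD a d (s : F) : a + s *: d \in line_dir a d.
Proof. exact: imset_f. Qed.

Lemma line_dir_base a d : a \in line_dir a d.
Proof. by rewrite -[X in X \in _]addr0 -(scale0r d) line_dirD. Qed.

Lemma line_dir_shift a d (s : F) : line_dir (a + s *: d) d = line_dir a d.
Proof.
apply/setP => x; apply/imsetP/imsetP => -[t _ ->].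
- by exists (s + t) => //; rewrite scalerDl addrA.
- by exists (t - s) => //; rewrite scalerBl addrCA addrK addrC.
Qed.

Lemma line_dir_mem [a d P] : P \in line_dir a d -> line_dir P d = line_dir a d.
Proof. by case/imsetP => t _ ->; rewrite line_dir_shift. Qed.

Lemma eq_line_dir_collinear a b d e :
  line_dir a d = line_dir b e -> exists c : F, d = c *: e.
Proof.
move=> Eab.
have := line_dir_base a d; rewrite Eab => /imsetP[s _ Ea].
have := line_dirD a d 1; rewrite scale1r Eab => /imsetP[t _ Ead].
by exists (t - s); rewrite -(addKr a d) Ead Ea opprD addrACA addNr add0r scalerBl addrC.
Qed.

Lemma line_dirZ a d (c : F) : c != 0 -> line_dir a (c *: d) = line_dir a d.
Proof.
move=> c0; apply/setP => x; apply/imsetP/imsetP => -[t _ ->].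
- by exists (t * c) => //; rewrite scalerA.
- by exists (t / c) => //; rewrite scalerA mulfVK.
Qed.

Lemma aline_through_inf0 L : is_aline L -> through_inf L 0 = false.
Proof.
case/existsP => a /existsP[e /andP[e0 /eqP ->]].
apply/negbTE/existsP => -[b /eqP/eq_line_dir_collinear[c]].
by rewrite scaler0 => /eqP; rewrite (negbTE e0).
Qed.

(* [through_inf] counts representing vectors, not projective points: an
   affine line has q - 1 of them, the nonzero multiples of its direction. *)
Lemma card_through_inf_aline L :
  is_aline L -> #|[set d | through_inf L d]| = #|F|.-1.
Proof.
case/existsP => a /existsP[e /andP[e0 /eqP ->]].
have -> : [set d | through_inf (line_dir a e) d] = [set c *: e | c in [set~ 0]].
  apply/setP => d; rewrite inE; apply/existsP/imsetP.
  - case=> b /eqP/eq_line_dir_collinear[c Ed].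
    have c0 : c != 0 by apply: contraNneq e0 => c0; rewrite Ed c0 scale0r.
    exists c^-1; first by rewrite !inE invr_eq0.
    by rewrite Ed scalerA mulVf // scale1r.
  - by case=> c; rewrite !inE => c0 ->; exists a; rewrite line_dirZ.
rewrite card_imset ?cardsC1 // => c c' /eqP.
by rewrite -subr_eq0 -scalerBl scaler_eq0 (negbTE e0) orbF subr_eq0 => /eqP.
Qed.

Definition line_base d L : 'rV[F]_n := odflt 0 [pick a | L == line_dir a d].

Lemma line_baseK [d L] : through_inf L d -> L = line_dir (line_base d L) d.
Proof.
rewrite /line_base; case: pickP => [a /eqP // | none /existsP[a]].
by rewrite none.
Qed.

Definition dir_closed S d := forall P (t : F), P \in S -> P + t *: d \in S.

Definition parallel_class S d := [set line_dir a d | a in S].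

Lemma cover_parallel_class [S d] :
  dir_closed S d -> cover (parallel_class S d) = S.
Proof.
move=> Sd; apply/setP => x; apply/bigcupP/idP.
- by case=> _ /imsetP[a aS ->] /imsetP[t _ ->]; apply: Sd.
- by move=> xS; exists (line_dir x d); [apply: imset_f | apply: line_dir_base].
Qed.

Lemma trivIset_parallel_class S d : trivIset (parallel_class S d).
Proof.
apply/trivIsetP => _ _ /imsetP[a _ ->] /imsetP[b _ ->] neq_ab.
rewrite -setI_eq0; apply/eqP/setP => x; rewrite !inE.
apply/negP => /andP[xa xb]; move: neq_ab.
by rewrite -(line_dir_mem xa) -(line_dir_mem xb) eqxx.
Qed.

Lemma mem_parallel_class [S d] L : dir_closed S d ->
  (L \in parallel_class S d) = through_inf L d && (L \subset S).
Proof.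
move=> Sd; apply/imsetP/andP => [[a aS ->] | [/existsP[a /eqP ->] LS]].
- split; first by apply/existsP; exists a.
  by apply/subsetP => _ /imsetP[t _ ->]; apply: Sd.
- by exists a => //; apply: (subsetP LS); apply: line_dir_base.
Qed.

Definition plane_dir a d1 d2 := [set a + s *: d1 + t *: d2 | s : F, t : F].

Lemma plane_dir_closedl a d1 d2 : dir_closed (plane_dir a d1 d2) d1.
Proof.
move=> _ u /imset2P[s t _ _ ->]; apply/imset2P; exists (s + u) t => //.
by rewrite scalerDl addrA [RHS]addrAC.
Qed.

Lemma plane_dir_closedr a d1 d2 : dir_closed (plane_dir a d1 d2) d2.
Proof.
move=> _ u /imset2P[s t _ _ ->]; apply/imset2P; exists s (t + u) => //.
by rewrite scalerDl addrA.
Qed.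

Lemma line_dir_sub_planer a d1 d2 : line_dir a d2 \subset plane_dir a d1 d2.
Proof.
by apply/subsetP => _ /imsetP[t _ ->]; apply/imset2P; exists 0 t; rewrite ?scale0r ?addr0.
Qed.

Lemma plane_dir_sym [a b d1 d2] : b \in plane_dir a d1 d2 -> a \in plane_dir b d1 d2.
Proof.
case/imset2P => s t _ _ ->; apply/imset2P; exists (- s) (- t) => //.
by rewrite !scaleNr (addrAC _ (t *: d2)) !addrK.
Qed.

Lemma sum_card_through_inf (Lc : {set {set 'rV[F]_n}}) :
  (\sum_(L in Lc) #|[set d | through_inf L d]| =
   \sum_d #|[set L in Lc | through_inf L d]|)%N.
Proof.
transitivity (\sum_(L in Lc) \sum_d (through_inf L d : nat))%N.
  apply: eq_bigr => L _; rewrite -sum1_card big_mkcond /=.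
  by apply: eq_bigr => d _; rewrite inE; case: through_inf.
rewrite exchange_big; apply: eq_bigr => d _.
rewrite -sum1_card big_mkcond [RHS]big_mkcond /=; apply: eq_bigr => L _.
by rewrite !inE; case: (L \in Lc); case: through_inf.
Qed.

Lemma hom_line_dir_sub [m] [M : 'M[F]_(m, n + 1)] [a d P] :
  (row_mx d 0 <= M)%MS -> (Defs.hom a <= M)%MS -> P \in line_dir a d ->
  (Defs.hom P <= M)%MS.
Proof.
move=> dM aM /imsetP[t _ ->].
have -> : Defs.hom (a + t *: d) = Defs.hom a + t *: row_mx d 0.
  by rewrite /Defs.hom scale_row_mx add_row_mx scaler0 addr0.
by rewrite addmx_sub // scalemx_sub.
Qed.

Lemma hom_plane_dir_sub [m] [M : 'M[F]_(m, n + 1)] [a d1 d2 P] :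
  (row_mx d1 0 <= M)%MS -> (row_mx d2 0 <= M)%MS -> (Defs.hom a <= M)%MS ->
  P \in plane_dir a d1 d2 -> (Defs.hom P <= M)%MS.
Proof.
move=> d1M d2M aM /imset2P[s t _ _ ->].
apply: (hom_line_dir_sub d2M _ (line_dirD _ _ _)).
exact: (hom_line_dir_sub d1M aM (line_dirD _ _ _)).
Qed.

Lemma span_lines_sub [m] [M : 'M[F]_(m, n + 1)] [S : {set {set 'rV[F]_n}}] :
  (forall L P, L \in S -> P \in L -> (Defs.hom P <= M)%MS) -> (span_lines S <= M)%MS.
Proof.
move=> SM; apply/sumsmx_subP => L LS; apply/sumsmx_subP => P PL.
by rewrite genmxE; apply: (SM L).
Qed.

Lemma rank_sum_genmx_row [I : finType] (A : {set I}) (v : I -> 'rV[F]_(n + 1)) :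
  (\rank (\sum_(i in A) <<v i>>)%MS <= #|A|)%N.
Proof.
rewrite -sum1_card; apply: (big_ind2 (fun B k => \rank B <= k)%N).
- by rewrite mxrank0.
- move=> B k C l Bk Cl; apply: leq_trans (mxrank_adds_leqif B C).1 _.
  exact: leq_add.
- by move=> i _; rewrite mxrank_gen rank_leq_row.
Qed.

End AffineLines.

Section CameronLieblerClass.
Context {R : realType} {F : finFieldType} {n : nat}.
Context {Lc : {set {set 'rV[F]_n}}} {w : 'rV[F]_n -> R}.
Hypothesis Lc_alines : forall L, L \in Lc -> is_aline L.
Hypothesis Lc_weight : forall L, is_aline L -> (L \in Lc)%:R = \sum_(P in L) w P.

Lemma CL_sum_dir_closed [S : {set 'rV[F]_n}] [d] : d != 0 -> dir_closed S d ->
  \sum_(P in S) w P = #|[set L in Lc | through_inf L d & L \subset S]|%:R.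
Proof.
move=> d0 Sd.
rewrite -{1}(cover_parallel_class Sd) big_trivIset ?trivIset_parallel_class //=.
transitivity (\sum_(L in parallel_class S d) ((L \in Lc)%:R : R)).
  apply: eq_bigr => _ /imsetP[a _ ->]; rewrite Lc_weight //.
  by apply/existsP; exists a; apply/existsP; exists d; rewrite d0 eqxx.
rewrite -sumr_const big_mkcond [RHS]big_mkcond /=.
apply: eq_bigr => L _; rewrite !inE (mem_parallel_class _ Sd).
by case: (L \in Lc); case: (_ && _).
Qed.

Lemma CL_card_through_inf [d] : d != 0 ->
  #|[set L in Lc | through_inf L d]|%:R = \sum_P w P.
Proof.
move=> d0; have closedT : dir_closed [set: 'rV[F]_n] d by move=> *; rewrite inE.
transitivity (\sum_(P in [set: 'rV[F]_n]) w P); last by apply: eq_bigl => P; rewrite inE.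
rewrite (CL_sum_dir_closed d0 closedT).
by congr _%:R; apply: eq_card => L; rewrite !inE subsetT andbT.
Qed.

Lemma CL_param_total_weight : (0 < n)%N -> CL_param R Lc = \sum_P w P.
Proof.
move=> n_gt0.
have q_gt1 : (1 < #|F|)%N.
  by apply/card_gt1P; exists 0, 1; rewrite !inE eq_sym oner_neq0.
have qn_gt1 : (1 < #|F| ^ n)%N by rewrite -(expn0 #|F|) ltn_exp2l.
have no_line_through0 : [set L in Lc | through_inf L 0] = set0.
  apply/setP => L; rewrite !inE; case: (boolP (L \in Lc)) => //= /Lc_alines.
  exact: aline_through_inf0.
have incidences : (#|Lc| * #|F|.-1 = \sum_d #|[set L in Lc | through_inf L d]|)%N.
  rewrite -sum_card_through_inf -sum_nat_const; apply: eq_bigr => L /Lc_alines.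
  by move/card_through_inf_aline.
have incidences_weight :
    (\sum_d #|[set L in Lc | through_inf L d]|)%:R = (\sum_P w P) *+ (#|F| ^ n).-1.
  rewrite natr_sum (bigD1 0) //= no_line_through0 cards0 add0r.
  rewrite (eq_bigr (fun _ => \sum_P w P)) => [|d d0]; last exact: CL_card_through_inf.
  by rewrite sumr_const cardC1 card_mx mul1n.
have qn1_neq0 : ((#|F| ^ n).-1)%:R != 0 :> R.
  by rewrite pnatr_eq0 -lt0n -subn1 subn_gt0.
rewrite /CL_param -natrX -(natrB _ (ltnW q_gt1)) -(natrB _ (ltnW qn_gt1)) !subn1.
by rewrite -natrM incidences incidences_weight -(mulr_natr (\sum_P w P)) mulfK.
Qed.

Lemma CL_coplanar_partner [a d1 d2] : d1 != 0 -> d2 != 0 ->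
  line_dir a d2 \in Lc ->
  exists2 L, L \in [set L in Lc | through_inf L d1] & L \subset plane_dir a d1 d2.
Proof.
move=> d10 d20 aLc.
have balanced := etrans (esym (CL_sum_dir_closed d10 (plane_dir_closedl a d1 d2)))
                        (CL_sum_dir_closed d20 (plane_dir_closedr a d1 d2)).
have : (0 < #|[set L in Lc | through_inf L d1 & L \subset plane_dir a d1 d2]|)%N.
  move/eqP: balanced; rewrite eqr_nat => /eqP ->; apply/card_gt0P.
  exists (line_dir a d2); rewrite !inE aLc line_dir_sub_planer andbT.
  by apply/existsP; exists a.
case/card_gt0P => L; rewrite !inE => /and3P[LLc Ld1 Lplane].
by exists L; rewrite // inE LLc.
Qed.

Lemma CL_rank_span_through_inf [d1 d2] : d1 != 0 -> d2 != 0 ->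
  (\rank (span_lines ([set L in Lc | through_inf L d1] :|:
                      [set L in Lc | through_inf L d2]))
     <= #|[set L in Lc | through_inf L d1]| + 2)%N.
Proof.
move=> d10 d20; set T1 := [set L in Lc | through_inf L d1].
pose M := (\sum_(L in T1) <<Defs.hom (line_base d1 L)>> +
           <<row_mx d1 0>> + <<row_mx d2 0>>)%MS.
have d1M : (row_mx d1 0 <= M)%MS.
  by rewrite (submx_trans _ (addsmxSl _ _)) // (submx_trans _ (addsmxSr _ _)) // genmxE.
have d2M : (row_mx d2 0 <= M)%MS by rewrite (submx_trans _ (addsmxSr _ _)) // genmxE.
have T1M L P : L \in T1 -> P \in L -> (Defs.hom P <= M)%MS.
  move=> LT1; move: (LT1); rewrite inE => /andP[_ /line_baseK ->].
  move/(hom_line_dir_sub d1M); apply.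
  rewrite (submx_trans _ (addsmxSl _ _)) // (submx_trans _ (addsmxSl _ _)) //.
  by rewrite (sumsmx_sup L) // genmxE.
apply: leq_trans (mxrankS (span_lines_sub (M := M) _)) _.
  move=> L P; rewrite inE => /orP[LT1 | ]; first exact: T1M LT1.
  rewrite inE => /andP[LLc /line_baseK EL].
  rewrite EL in LLc *; apply: (hom_line_dir_sub d2M).
  have [L1 L1T1 L1plane] := CL_coplanar_partner d10 d20 LLc.
  have bL1 : line_base d1 L1 \in L1.
    by move: (L1T1); rewrite inE => /andP[_ /line_baseK {2}->]; apply: line_dir_base.
  apply: (hom_plane_dir_sub d1M d2M (T1M _ _ L1T1 bL1)).
  exact/plane_dir_sym/(subsetP L1plane).
have rank_genrow (v : 'rV[F]_(n + 1)) : (\rank <<v>> <= 1)%N.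
  by rewrite mxrank_gen rank_leq_row.
rewrite -[2%N]/(1 + 1)%N addnA; apply: leq_trans (mxrank_adds_leqif _ _).1 _.
apply: leq_add (rank_genrow _); apply: leq_trans (mxrank_adds_leqif _ _).1 _.
exact: leq_add (rank_sum_genmx_row T1 _) (rank_genrow _).
Qed.

End CameronLieblerClass.

Theorem lemma6p6 (R : realType) (F : finFieldType) (n : nat)
  (Lc : {set {set 'rV[F]_n}}) :
  (4 <= n)%N -> CL_class R Lc -> CL_param R Lc = 2 ->
  forall d1 d2 : 'rV[F]_n, d1 != 0 -> d2 != 0 ->
  \rank (col_mx d1 d2) = 2%N ->
  #|[set L in Lc | through_inf L d1]| = 2%N /\
  #|[set L in Lc | through_inf L d2]| = 2%N /\
  (\rank (span_lines ([set L in Lc | through_inf L d1] :|: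
                      [set L in Lc | through_inf L d2])) <= 4)%N.
Proof.
move=> n_ge4 [Lc_alines [w Lc_weight]] param2 d1 d2 d10 d20 _.
have card_through_inf d : d != 0 -> #|[set L in Lc | through_inf L d]| = 2%N.
  move=> d0; apply/eqP; rewrite -(eqr_nat R) (CL_card_through_inf Lc_weight d0).
  by rewrite -(CL_param_total_weight Lc_alines Lc_weight) ?param2 // (leq_trans _ n_ge4).
split; first exact: card_through_inf.
split; first exact: card_through_inf.
apply: leq_trans (CL_rank_span_through_inf Lc_weight d10 d20) _.
by rewrite card_through_inf.
Qed.
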